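(* Assume $\lambda_1<\lambda_2$ and $\lambda_1<\lambda_3$, and fix $a,b>0$. Then for all sufficiently large $\Delta>0$ there exist constants $C>0$ and $\varepsilon>0$ such that for every $y=(y_2,y_3)\in\mathbb Z^2$ with $\min(y_2,y_3)<0$ and $\varphi(y)>C$: (a) $D_R(y):=\sum_{z\ne y} r_{yz}\,(\varphi(z)-\varphi(y))\le 0$; (b) $\varphi(y+M_F(y))-\varphi(y)<-5\varepsilon$, where $M_F(y)=(\lambda_2-\lambda_1,\lambda_3-\lambda_1)$.
   Context: Markov chain $Y(n)=(y_2,y_3)\in\mathbb Z^2$ (relative coordinates $y_j=x_j-x_1$ of the embedded chain of the 3-processor cascade model, time normalized so that $\lambda_1+\lambda_2+\lambda_3+\beta_{12}+\beta_{23}=1$, all parameters positive). Its transition probabilities are $p_{yz}=s_{yz}+r_{yz}$ for $z\ne y$, $p_{yy}=1-\sum_{z\ne y}p_{yz}$, where the free-dynamics part is $s_{y,y+(1,0)}=\lambda_2$, $s_{y,y+(0,1)}=\lambda_3$, $s_{y,y-(1,1)}=\lambda_1$ (others $0$), and the rollback part $r_{yz}$ (with $b_2=\lambda_2/(\lambda_2+\beta_{23})$) is: if $y_2>0$ and $y_3\le 0$: $r_{y,(0,y_3)}=\beta_{12}$; if $y_2<y_3$: $r_{y,(y_2,y_2)}$ receives $\beta_{23}$; if $0<y_3\le y_2$: $r_{y,(0,z_3)}$ receives $\beta_{12}(1-b_2)^{z_3}b_2$ for $0\le z_3<y_3$ and $\beta_{12}(1-b_2)^{y_3}$ for $z_3=y_3$;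 if $0<y_2<y_3$: $r_{y,(0,z_3)}$ receives $\beta_{12}(1-b_2)^{z_3}b_2$ for $0\le z_3\le y_2$ and $\beta_{12}(1-b_2)^{y_2+1}$ for $z_3=y_3$ (contributions to the same $z$ are added). Contour $L$: let $e(y)=ay_2^2+b(y_2-y_3)^2$; let $T_3$ be the point of the ellipse $\{e=1\}$ at which the outer normal has direction $(-\Delta,1)$ and $T_2$ the point at which it has direction $(1,-\Delta)$ (for large $\Delta$, $T_3$ lies in $\{y_2<0,y_3<0\}$ and $T_2$ in $\{y_3<0\}$); let $K_3=(0,u_3)$ be the intersection of the tangent line at $T_3$ with the $y_3$-axis and $K_2=(u_2,0)$ the intersection of the tangent line at $T_2$ with the $y_2$-axis ($u_2,u_3>0$). $L$ is the closed curve formed by the segment $K_3K_2$, the segment $K_2T_2$, the arc $T_2T_3$ of the ellipse passing through $(-a^{-1/2},-a^{-1/2})$, and the segment $T_3K_3$; every open ray from the origin meets $L$ exactly once. Define $\varphi(0)=0$ and, for $y\ne0$, $\varphi(y)>0$ as the unique number with $y/\varphi(y)\in L$. *)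

From HB Require Import structures.
From mathcomp Require Import all_boot all_order all_algebra.
From mathcomp Require Import boolp classical_sets reals.
Set Implicit Arguments. Unset Strict Implicit. Unset Printing Implicit Defensive.
Import Order.TTheory GRing.Theory Num.Theory.
Local Open Scope ring_scope.
Local Open Scope classical_set_scope.

(* Points of the plane: P = (P.1, P.2) = (y_2, y_3). *)

Definition ell {R : realType} (a b : R) (P : R * R) : R :=
  a * P.1 ^+ 2 + b * (P.1 - P.2) ^+ 2.

Definition grad_ell {R : realType} (a b : R) (P : R * R) : R * R :=
  (2 * (a * P.1 + b * (P.1 - P.2)), - (2 * (b * (P.1 - P.2)))).

Definition normal_dir {R : realType} (a b : R) (P n : R * R) : Prop :=
  exists k : R, 0 < k /\ grad_ell a b P = (k * n.1, k * n.2).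

Definition T3 {R : realType} (a b D : R) : R * R :=
  xget (0, 0) [set P | ell a b P = 1 /\ normal_dir a b P (- D, 1)].

Definition T2 {R : realType} (a b D : R) : R * R :=
  xget (0, 0) [set P | ell a b P = 1 /\ normal_dir a b P (1, - D)].

Definition tangent_line {R : realType} (a b : R) (P : R * R) : set (R * R) :=
  [set X | (grad_ell a b P).1 * (X.1 - P.1) + (grad_ell a b P).2 * (X.2 - P.2) = 0].

Definition K3 {R : realType} (a b D : R) : R * R :=
  xget (0, 0) [set X | X.1 = 0 /\ tangent_line a b (T3 a b D) X].

Definition K2 {R : realType} (a b D : R) : R * R :=
  xget (0, 0) [set X | X.2 = 0 /\ tangent_line a b (T2 a b D) X].

Definition segment {R : realType} (A B : R * R) : set (R * R) :=
  [set X | exists s : R, 0 <= s <= 1 /\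
     X = (A.1 + s * (B.1 - A.1), A.2 + s * (B.2 - A.2))].

Definition side {R : realType} (A B P : R * R) : R :=
  (B.1 - A.1) * (P.2 - A.2) - (B.2 - A.2) * (P.1 - A.1).

Definition Qpt {R : realType} (a : R) : R * R :=
  (- (Num.sqrt a)^-1, - (Num.sqrt a)^-1).

(* closed arc T2T3 of the ellipse passing through Qpt: the points of the ellipse
   lying (weakly) on the same side of the chord T2T3 as Qpt *)
Definition arcT2T3 {R : realType} (a b D : R) : set (R * R) :=
  [set P | ell a b P = 1 /\
     0 <= side (T2 a b D) (T3 a b D) P * side (T2 a b D) (T3 a b D) (Qpt a)].

Definition contourL {R : realType} (a b D : R) : set (R * R) :=
  segment (K3 a b D) (K2 a b D) `|` segment (K2 a b D) (T2 a b D)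
  `|` arcT2T3 a b D `|` segment (T3 a b D) (K3 a b D).

Definition phi {R : realType} (a b D : R) (y : R * R) : R :=
  if y == (0, 0) then 0
  else xget 0 [set t | 0 < t /\ contourL a b D (y.1 / t, y.2 / t)].

Definition ptR {R : realType} (y : int * int) : R * R := (y.1%:~R, y.2%:~R).

Definition rrate {R : realType} (l2 b12 b23 : R) (y z : int * int) : R :=
  let b2 := l2 / (l2 + b23) in
  let y2 := y.1 in let y3 := y.2 in
  let z3 := z.2 in
  (if (0 < y2) && (y3 <= 0) && (z == (0, y3)) then b12 else 0)
  + (if (y2 < y3) && (z == (y2, y2)) then b23 else 0)
  + (if (0 < y3) && (y3 <= y2) && (z.1 == 0) then
       (if (0 <= z3) && (z3 < y3) then b12 * (1 - b2) ^+ `|z3|%N * b2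
        else if z3 == y3 then b12 * (1 - b2) ^+ `|y3|%N else 0)
     else 0)
  + (if (0 < y2) && (y2 < y3) && (z.1 == 0) then
       (if (0 <= z3) && (z3 <= y2) then b12 * (1 - b2) ^+ `|z3|%N * b2 else 0)
       + (if z3 == y3 then b12 * (1 - b2) ^+ (`|y2|%N).+1 else 0)
     else 0).

(* a finite list of states containing the support of z |-> r_{yz} *)
Definition rsupp (y : int * int) : seq (int * int) :=
  [:: (y.1, y.1); (0, y.2)] ++ [seq (0, (k%:Z)%R) | k <- iota 0 (`|y.2|%N).+1].

Definition DR {R : realType} (l2 b12 b23 a b D : R) (y : int * int) : R :=
  \sum_(z <- undup (rsupp y) | z != y)
     rrate l2 b12 b23 y z * (phi a b D (ptR z) - phi a b D (ptR y)).

Definition MF {R : realType} (l1 l2 l3 : R) : R * R := (l2 - l1, l3 - l1).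

(* [phi] is the gauge function of the convex region bounded by [L]: [phi X] is the
   largest value of [dot f X] over the functionals [f] that are at most 1 on [L],
   attained by a functional supporting [L] at [X / phi X].  Off the closed first
   quadrant the supporting functionals are the half-gradients of [ell] at points of
   the arc [T2 T3], i.e. nonnegative combinations of those at [T2] and [T3], which
   point along (1, -D) and (-D, 1).  For large D both are negative on the drift
   M_F, which gives (b).  For (a), a rollback from a state with a negative
   coordinate lands on the axis y2 = 0 or on the diagonal y2 = y3, where the
   supporting functional has a nonnegative y2- resp. y3-component, so [phi] at the
   target is at most [phi] at the state. *)

From HB Require Import structures.
From mathcomp Require Import all_boot all_order all_algebra.
From mathcomp Require Import boolp classical_sets reals.
From mathcomp Require Import ring lra.
Import Order.TTheory GRing.Theory Num.Theory.
Local Open Scope ring_scope.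

Set Implicit Arguments.
Unset Strict Implicit.
Unset Printing Implicit Defensive.

Section Plane.
Variable R : realType.
Implicit Types (a b c m n t : R) (A B P W X f u : R * R).

Definition dot f X := f.1 * X.1 + f.2 * X.2.

Definition cross A B := A.1 * B.2 - A.2 * B.1.

Definition lincomb m n A B := (m * A.1 + n * B.1, m * A.2 + n * B.2).

Lemma dot_lincomb f m n A B : dot f (lincomb m n A B) = m * dot f A + n * dot f B.
Proof. rewrite /dot /=; ring. Qed.

Lemma dotD f X Y : dot f (X.1 + Y.1, X.2 + Y.2) = dot f X + dot f Y.
Proof. rewrite /dot /=; ring. Qed.

Lemma dot_div f X t : dot f (X.1 / t, X.2 / t) = dot f X / t.
Proof. rewrite /dot /=; ring. Qed.

Lemma lincomb_div m n A B t :
  ((lincomb m n A B).1 / t, (lincomb m n A B).2 / t) = lincomb (m / t) (n / t) A B.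
Proof. by rewrite /lincomb /=; congr pair; ring. Qed.

Lemma lincomb_cross A B X : cross A B != 0 ->
  X = lincomb (cross X B / cross A B) (cross A X / cross A B) A B.
Proof. by case: X => x1 x2 hAB; rewrite /lincomb /cross /=; congr pair; field. Qed.

Lemma cone_lincomb A B X : cross A B != 0 ->
  0 <= cross X B * cross A B -> 0 <= cross A X * cross A B ->
  exists m n, [/\ 0 <= m, 0 <= n & X = lincomb m n A B].
Proof.
move=> hAB hm hn; exists (cross X B / cross A B), (cross A X / cross A B).
have hc2 : 0 < cross A B ^+ 2 by rewrite exprn_even_gt0.
have quot_ge0 x : 0 <= x * cross A B -> 0 <= x / cross A B.
  move=> hx; have -> : x / cross A B = x * cross A B / cross A B ^+ 2 by field.
  by rewrite divr_ge0 // ltW.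
by split; [exact: quot_ge0 | exact: quot_ge0 | exact: lincomb_cross].
Qed.

Lemma segmentP A B W :
  segment A B W <-> exists2 s, 0 <= s <= 1 & W = lincomb (1 - s) s A B.
Proof.
split=> [[s [hs ->]] | [s hs ->]]; exists s => //; rewrite /lincomb /=.
  by congr pair; ring.
by split=> //; congr pair; ring.
Qed.

Lemma dot_segment_le f A B W c :
  segment A B W -> dot f A <= c -> dot f B <= c -> dot f W <= c.
Proof. by case/segmentP=> s /andP[s0 s1] -> hA hB; rewrite dot_lincomb; nra. Qed.

Lemma dot_segment_eq f A B W c :
  segment A B W -> dot f A = c -> dot f B = c -> dot f W = c.
Proof. by case/segmentP=> s _ -> hA hB; rewrite dot_lincomb hA hB; ring. Qed.

Lemma dot_segment_gt0 f A B W :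
  segment A B W -> 0 < dot f A -> 0 < dot f B -> 0 < dot f W.
Proof.
case/segmentP=> s /andP[s0 s1] -> hA hB; rewrite dot_lincomb.
have [->|s_neq0] := eqVneq s 0; first by rewrite subr0 mul1r mul0r addr0.
by rewrite ltr_wpDl ?mulr_ge0 ?subr_ge0 ?(ltW hA) // mulr_gt0 // lt_def s_neq0.
Qed.

Lemma cone_segment A B X m n : 0 <= m -> 0 <= n -> X = lincomb m n A B ->
  X != (0, 0) -> exists2 t, 0 < t & segment A B (X.1 / t, X.2 / t).
Proof.
move=> hm hn -> hX; have mn_gt0 : 0 < m + n.
  rewrite lt_def addr_ge0 // andbT; apply: contraNneq hX => mn0.
  have [-> ->] : m = 0 /\ n = 0 by split; lra.
  by rewrite /lincomb !mul0r addr0.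
exists (m + n) => //; apply/segmentP; exists (n / (m + n)).
  rewrite divr_ge0 ?(ltW mn_gt0) //= ler_pdivrMr // mul1r; lra.
by rewrite lincomb_div; congr lincomb; field; rewrite lt0r_neq0.
Qed.

Lemma side_lincomb A B m n : side A B (lincomb m n A B) = - cross A B * (m + n - 1).
Proof. rewrite /side /cross /lincomb /=; ring. Qed.

Lemma side_left A B : side A B A = 0.
Proof. rewrite /side; ring. Qed.

Lemma side_right A B : side A B B = 0.
Proof. rewrite /side; ring. Qed.

Lemma neg_coord_neq0 X : X.1 < 0 \/ X.2 < 0 -> X != (0, 0).
Proof. by case: X => x1 x2 /= hX; apply/eqP => -[e1 e2]; case: hX; rewrite ?e1 ?e2 ltxx. Qed.

Lemma int_le_Nr1 (i : int) : i < 0 -> (i%:~R : R) <= -1.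
Proof. by move=> i_lt0; have : i <= -1 by []; rewrite -(ler_int R) mulrN1z. Qed.

Lemma ptR_neg (y : int * int) : Num.min y.1 y.2 < 0 ->
  (ptR y : R * R).1 <= -1 \/ (ptR y : R * R).2 <= -1.
Proof. by rewrite gt_min => /orP[/int_le_Nr1|/int_le_Nr1]; [left|right]. Qed.

(* Half of [grad_ell a b P]; [dot (ell_normal a b P) X] is the polar form of [ell a b]. *)
Definition ell_normal a b P := (a * P.1 + b * (P.1 - P.2), - (b * (P.1 - P.2))).

Lemma dot_ell_normalC a b P X : dot (ell_normal a b P) X = dot (ell_normal a b X) P.
Proof. rewrite /dot /ell_normal /=; ring. Qed.

Lemma dot_ell_normal_diag a b P : dot (ell_normal a b P) P = ell a b P.
Proof. rewrite /dot /ell_normal /ell /=; ring. Qed.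

Lemma dot_ell_normal_lincomb a b m n A B X :
  dot (ell_normal a b (lincomb m n A B)) X =
  m * dot (ell_normal a b A) X + n * dot (ell_normal a b B) X.
Proof. by rewrite dot_ell_normalC dot_lincomb !(dot_ell_normalC _ _ X). Qed.

Lemma ell_lincomb a b m n A B : ell a b (lincomb m n A B) =
  m ^+ 2 * ell a b A + n ^+ 2 * ell a b B + 2 * m * n * dot (ell_normal a b A) B.
Proof. rewrite /ell /lincomb /dot /ell_normal /=; ring. Qed.

Lemma ell_div a b X t : ell a b (X.1 / t, X.2 / t) = ell a b X / t ^+ 2.
Proof. by rewrite /ell /= -mulrBl !expr_div_n; ring. Qed.

Lemma ell_lagrange a b P X : ell a b P * ell a b X =
  dot (ell_normal a b P) X ^+ 2 + a * b * cross P X ^+ 2.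
Proof. rewrite /ell /dot /ell_normal /cross /=; ring. Qed.

Lemma ell_gt0 a b X : 0 < a -> 0 < b -> X != (0, 0) -> 0 < ell a b X.
Proof.
case: X => x1 x2 ha hb hX; rewrite /ell /=.
have [x1_0|x1_neq0] := eqVneq x1 0.
  have x2_neq0 : x2 != 0 by apply: contraNneq hX => ->; rewrite x1_0.
  rewrite x1_0 expr0n mulr0 add0r sub0r sqrrN; apply: mulr_gt0 => //.
  by rewrite exprn_even_gt0 // x2_neq0 orbT.
have : 0 < a * x1 ^+ 2 by rewrite mulr_gt0 // exprn_even_gt0 // x1_neq0 orbT.
have : 0 <= b * (x1 - x2) ^+ 2 by rewrite mulr_ge0 ?sqr_ge0 // ltW.
lra.
Qed.

Lemma tangent_lineE a b P X : tangent_line a b P X <-> dot (ell_normal a b P) X = ell a b P.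
Proof.
have E : (grad_ell a b P).1 * (X.1 - P.1) + (grad_ell a b P).2 * (X.2 - P.2) =
    2 * (dot (ell_normal a b P) X - ell a b P).
  by rewrite /grad_ell /dot /ell_normal /ell /=; ring.
rewrite /tangent_line /= E; split=> [/eqP|->]; last by rewrite subrr mulr0.
by rewrite mulf_eq0 pnatr_eq0 /= subr_eq0 => /eqP.
Qed.

Lemma normal_dirP a b P u : normal_dir a b P u ->
  exists2 c, 0 < c & ell_normal a b P = (c * u.1, c * u.2).
Proof.
case=> k [k_gt0]; rewrite /grad_ell /ell_normal => -[h1 h2].
exists (k / 2); first by rewrite divr_gt0.
by congr pair; rewrite mulrAC -?h1 -?h2; field.
Qed.

Lemma ellipse_point_normal a b W u : 0 < a -> 0 < b -> W != (0, 0) ->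
  normal_dir a b W u -> exists P, ell a b P = 1 /\ normal_dir a b P u.
Proof.
move=> ha hb hW [k [k_gt0]]; rewrite /grad_ell => -[h1 h2].
have eW_gt0 := ell_gt0 ha hb hW; set t := Num.sqrt (ell a b W).
have t_gt0 : 0 < t by rewrite sqrtr_gt0.
exists (W.1 / t, W.2 / t); split.
  by rewrite ell_div sqr_sqrtr ?divff ?(ltW eW_gt0) ?lt0r_neq0.
exists (k / t); split; first by rewrite divr_gt0.
rewrite /grad_ell /=; congr pair.
  by transitivity (2 * (a * W.1 + b * (W.1 - W.2)) / t); [ring | rewrite h1; ring].
by transitivity (- (2 * (b * (W.1 - W.2))) / t); [ring | rewrite h2; ring].
Qed.

Section UnitEllipse.
Variables (a b : R).
Hypotheses (a_gt0 : 0 < a) (b_gt0 : 0 < b).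

Lemma dot_ell_normal_le1 P X :
  ell a b P = 1 -> ell a b X = 1 -> dot (ell_normal a b P) X <= 1.
Proof.
move=> eP eX; have := ell_lagrange a b P X; rewrite eP eX mulr1.
have := mulr_ge0 (mulr_ge0 (ltW a_gt0) (ltW b_gt0)) (sqr_ge0 (cross P X)).
nra.
Qed.

Lemma dot_ell_normal_lt1 P X : ell a b P = 1 -> ell a b X = 1 ->
  cross P X != 0 -> dot (ell_normal a b P) X < 1.
Proof.
move=> eP eX hPX; have := ell_lagrange a b P X; rewrite eP eX mulr1.
have c2_gt0 : 0 < cross P X ^+ 2 by rewrite exprn_even_gt0 // hPX orbT.
have := mulr_gt0 (mulr_gt0 a_gt0 b_gt0) c2_gt0.
nra.
Qed.

Lemma ellipse_lincomb_sqr A B m n : ell a b A = 1 -> ell a b B = 1 ->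
  ell a b (lincomb m n A B) = 1 ->
  (m + n) ^+ 2 = 1 + 2 * (m * n) * (1 - dot (ell_normal a b A) B).
Proof. by move=> eA eB e; rewrite -[X in _ = X + _]e ell_lincomb eA eB; ring. Qed.

Lemma ellipse_cone_sum A B m n : ell a b A = 1 -> ell a b B = 1 -> cross A B != 0 ->
  ell a b (lincomb m n A B) = 1 -> (0 <= m /\ 0 <= n) <-> 1 <= m + n.
Proof.
move=> eA eB hAB e; have sq := ellipse_lincomb_sqr eA eB e.
have B0_gt0 : 0 < 1 - dot (ell_normal a b A) B by rewrite subr_gt0 dot_ell_normal_lt1.
set B0 := 1 - _ in sq B0_gt0.
split=> [[m0 n0]|s1].
  have : 0 <= m * n * B0 by rewrite !mulr_ge0 // ltW.
  nra.
have mn_ge0 : 0 <= m * n.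
  rewrite leNgt; apply/negP => mn_lt0.
  have : m * n * B0 < 0 by rewrite pmulr_llt0.
  nra.
split; nra.
Qed.

Lemma ellipse_cone_sum_gt1 A B m n : ell a b A = 1 -> ell a b B = 1 -> cross A B != 0 ->
  ell a b (lincomb m n A B) = 1 -> 0 < m -> 0 < n -> 1 < m + n.
Proof.
move=> eA eB hAB e m0 n0; have sq := ellipse_lincomb_sqr eA eB e.
have B0_gt0 : 0 < 1 - dot (ell_normal a b A) B by rewrite subr_gt0 dot_ell_normal_lt1.
set B0 := 1 - _ in sq B0_gt0.
have : 0 < m * n * B0 by rewrite !mulr_gt0.
nra.
Qed.

End UnitEllipse.
End Plane.

Section Contour.
Variables (R : realType) (a b D : R).
Hypotheses (a_gt0 : 0 < a) (b_gt0 : 0 < b) (D_gt1 : 1 < D) (a_lt : a < b * (D - 1)).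

Local Notation t2 := (T2 a b D).
Local Notation t3 := (T3 a b D).
Local Notation k2 := (K2 a b D).
Local Notation k3 := (K3 a b D).
Local Notation arc := (arcT2T3 a b D).
Local Notation nrm := (ell_normal a b).
Local Notation phiD := (phi a b D).

Let bD_gt0 : 0 < b * (D - 1). Proof. by rewrite mulr_gt0 // subr_gt0. Qed.

(* The witnesses [W] below have [ell_normal a b W = a * b * n] for the prescribed
   direction [n]; rescaling [W] onto the ellipse keeps that direction. *)
Lemma t2_spec : ell a b t2 = 1 /\ normal_dir a b t2 (1, - D).
Proof.
apply: (xgetPex (0, 0) (P := [set P | ell a b P = 1 /\ normal_dir a b P (1, - D)])).
apply: (ellipse_point_normal (W := (- (b * (D - 1)), - (b * (D - 1)) - a * D))) => //.
  by rewrite xpair_eqE oppr_eq0 (gt_eqF bD_gt0).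
by exists (2 * (a * b)); split; [rewrite !mulr_gt0 | rewrite /grad_ell /=; congr pair; ring].
Qed.

Lemma t3_spec : ell a b t3 = 1 /\ normal_dir a b t3 (- D, 1).
Proof.
apply: (xgetPex (0, 0) (P := [set P | ell a b P = 1 /\ normal_dir a b P (- D, 1)])).
apply: (ellipse_point_normal (W := (- (b * (D - 1)), - (b * (D - 1)) + a))) => //.
  by rewrite xpair_eqE oppr_eq0 (gt_eqF bD_gt0).
by exists (2 * (a * b)); split; [rewrite !mulr_gt0 | rewrite /grad_ell /=; congr pair; ring].
Qed.

Lemma ell_t2 : ell a b t2 = 1. Proof. exact: t2_spec.1. Qed.
Lemma ell_t3 : ell a b t3 = 1. Proof. exact: t3_spec.1. Qed.

Lemma t2_normal : exists2 c, 0 < c & nrm t2 = (c, - (c * D)).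
Proof. by have [_ /normal_dirP [c c_gt0 ->]] := t2_spec; exists c; rewrite //= mulr1 mulrN. Qed.

Lemma t3_normal : exists2 c, 0 < c & nrm t3 = (- (c * D), c).
Proof. by have [_ /normal_dirP [c c_gt0 ->]] := t3_spec; exists c; rewrite //= mulr1 mulrN. Qed.

Lemma t2_coord : t2.1 < 0 /\ t2.2 < t2.1.
Proof.
have [c c_gt0 E] := t2_normal.
have h1 : a * t2.1 + b * (t2.1 - t2.2) = c := congr1 fst E.
have h2 : b * (t2.1 - t2.2) = c * D by apply: oppr_inj; exact: (congr1 snd E).
have cD : 0 < c * (D - 1) by rewrite mulr_gt0 // subr_gt0.
have D_gt0 : 0 < D := lt_trans ltr01 D_gt1.
split; first by rewrite -(pmulr_rlt0 _ a_gt0); lra.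
by rewrite -subr_gt0 -(pmulr_rgt0 _ b_gt0) h2 mulr_gt0.
Qed.

(* The only use of [a < b (D - 1)]: it puts [T3] in the open third quadrant. *)
Lemma t3_coord : t3.1 < t3.2 /\ t3.2 < 0.
Proof.
have [c c_gt0 E] := t3_normal.
have h1 : a * t3.1 + b * (t3.1 - t3.2) = - (c * D) := congr1 fst E.
have h2 : b * (t3.2 - t3.1) = c by rewrite -[t3.2 - _]opprB mulrN; exact: (congr1 snd E).
have gap : t3.1 < t3.2 by rewrite -subr_gt0 -(pmulr_rgt0 _ b_gt0) h2.
split=> //; rewrite -(pmulr_rlt0 _ (mulr_gt0 a_gt0 b_gt0)).
have -> : a * b * t3.2 = b * (a * t3.1 + b * (t3.1 - t3.2)) + (a + b) * (b * (t3.2 - t3.1)).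
  by ring.
have : 0 < c * (b * (D - 1) - a) by rewrite mulr_gt0 // subr_gt0.
rewrite h1 h2; lra.
Qed.

Lemma k2E : k2 = (t2.1 - D * t2.2, 0).
Proof.
have [c c_gt0 E] := t2_normal.
have dotE X : dot (nrm t2) X = c * (X.1 - D * X.2) by rewrite E /dot /=; ring.
have tangentE X : tangent_line a b t2 X <-> X.1 - D * X.2 = t2.1 - D * t2.2.
  rewrite tangent_lineE -dot_ell_normal_diag !dotE.
  by split=> [/(mulfI (lt0r_neq0 c_gt0))|->].
have : [set X | X.2 = 0 /\ tangent_line a b t2 X]%classic k2.
  by apply: xgetI (_ : _ (t2.1 - D * t2.2, 0)); split=> //; apply/tangentE; rewrite /= mulr0 subr0.
case=> k2_2 /tangentE; rewrite k2_2 mulr0 subr0 => <-.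
by rewrite -k2_2 -surjective_pairing.
Qed.

Lemma k3E : k3 = (0, t3.2 - D * t3.1).
Proof.
have [c c_gt0 E] := t3_normal.
have dotE X : dot (nrm t3) X = c * (X.2 - D * X.1) by rewrite E /dot /=; ring.
have tangentE X : tangent_line a b t3 X <-> X.2 - D * X.1 = t3.2 - D * t3.1.
  rewrite tangent_lineE -dot_ell_normal_diag !dotE.
  by split=> [/(mulfI (lt0r_neq0 c_gt0))|->].
have : [set X | X.1 = 0 /\ tangent_line a b t3 X]%classic k3.
  by apply: xgetI (_ : _ (0, t3.2 - D * t3.1)); split=> //; apply/tangentE; rewrite /= mulr0 subr0.
case=> k3_1 /tangentE; rewrite k3_1 mulr0 subr0 => <-.
by rewrite -k3_1 -surjective_pairing.
Qed.


Lemma dot_t2_k2 : dot (nrm t2) k2 = 1.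
Proof.
have [c _ E] := t2_normal.
by rewrite -ell_t2 -dot_ell_normal_diag k2E E /dot /=; ring.
Qed.

Lemma dot_t3_k3 : dot (nrm t3) k3 = 1.
Proof.
have [c _ E] := t3_normal.
by rewrite -ell_t3 -dot_ell_normal_diag k3E E /dot /=; ring.
Qed.

Lemma k2_gt0 : 0 < k2.1.
Proof.
have [x2_lt0 y2_lt] := t2_coord; rewrite k2E /=.
have : 0 < (D - 1) * - t2.2 by rewrite mulr_gt0 // ?subr_gt0 ?oppr_gt0 //; lra.
lra.
Qed.

Lemma k3_gt0 : 0 < k3.2.
Proof.
have [x3_lt y3_lt0] := t3_coord; rewrite k3E /=.
have : 0 < (D - 1) * - t3.1 by rewrite mulr_gt0 // ?subr_gt0 ?oppr_gt0 //; lra.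
lra.
Qed.

(* Convexity of the contour at the corners [K2] and [K3]. *)
Lemma dot_t3_k2_le : dot (nrm t3) k2 <= dot (nrm t3) t2.
Proof.
have [c c_gt0 E] := t3_normal; have [x2_lt0 y2_lt] := t2_coord.
have gap : 0 < c * ((D ^+ 2 - 1) * - t2.2).
  by rewrite !mulr_gt0 // ?subr_gt0 ?oppr_gt0 ?exprn_egt1 //; lra.
rewrite k2E E /dot /=; lra.
Qed.

Lemma dot_t2_k3_le : dot (nrm t2) k3 <= dot (nrm t2) t3.
Proof.
have [c c_gt0 E] := t2_normal; have [x3_lt y3_lt0] := t3_coord.
have gap : 0 < c * ((D ^+ 2 - 1) * - t3.1).
  by rewrite !mulr_gt0 // ?subr_gt0 ?oppr_gt0 ?exprn_egt1 //; lra.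
rewrite k3E E /dot /=; lra.
Qed.

Lemma cross_t2_t3 : cross t2 t3 < 0.
Proof.
have [x2_lt0 y2_lt] := t2_coord; have [x3_lt y3_lt0] := t3_coord.
rewrite /cross (_ : _ - _ = t2.1 * (t3.2 - t3.1) + (t2.1 - t2.2) * t3.1); last by ring.
have : t2.1 * (t3.2 - t3.1) < 0 by rewrite nmulr_rlt0 // subr_gt0.
have : (t2.1 - t2.2) * t3.1 < 0 by rewrite pmulr_rlt0 ?subr_gt0 //; lra.
lra.
Qed.

Let cross_t2_t3_neq0 : cross t2 t3 != 0 := ltr0_neq0 cross_t2_t3.

(* [Qpt a] lies strictly inside the cone spanned by [T2] and [T3]. *)
Lemma side_Qpt : 0 < side t2 t3 (Qpt a).
Proof.
have [x2_lt0 y2_lt] := t2_coord; have [x3_lt y3_lt0] := t3_coord.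
have r_gt0 : 0 < (Num.sqrt a)^-1 by rewrite invr_gt0 sqrtr_gt0.
have eQ : ell a b (Qpt a) = 1.
  by rewrite /ell /Qpt /= subrr expr0n mulr0 addr0 sqrrN exprVn sqr_sqrtr ?mulfV ?gt_eqF // ltW.
have EQ := lincomb_cross (Qpt a) cross_t2_t3_neq0.
have m_gt0 : 0 < cross (Qpt a) t3 / cross t2 t3.
  by rewrite nmulr_lgt0 ?invr_lt0 ?cross_t2_t3 // /cross /Qpt /=; nra.
have n_gt0 : 0 < cross t2 (Qpt a) / cross t2 t3.
  by rewrite nmulr_lgt0 ?invr_lt0 ?cross_t2_t3 // /cross /Qpt /=; nra.
rewrite EQ side_lincomb; rewrite EQ in eQ.
have := ellipse_cone_sum_gt1 a_gt0 b_gt0 ell_t2 ell_t3 cross_t2_t3_neq0 eQ m_gt0 n_gt0.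
have := cross_t2_t3; nra.
Qed.

Let arc_weight_gt0 : 0 < - cross t2 t3 * side t2 t3 (Qpt a).
Proof. by rewrite mulr_gt0 ?oppr_gt0 ?cross_t2_t3 ?side_Qpt. Qed.

Lemma arc_lincomb W : arc W ->
  exists m n, [/\ 0 <= m, 0 <= n, 1 <= m + n & W = lincomb m n t2 t3].
Proof.
case=> eW hW; have EW := lincomb_cross W cross_t2_t3_neq0.
move: hW eW; rewrite EW side_lincomb; set m := _ / _; set n := _ / _ => hW eW.
have s1 : 1 <= m + n by move: hW; rewrite mulrAC pmulr_rge0 ?subr_ge0 ?arc_weight_gt0.
have [m0 n0] := (ellipse_cone_sum a_gt0 b_gt0 ell_t2 ell_t3 cross_t2_t3_neq0 eW).2 s1.
by exists m, n.
Qed.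

Lemma lincomb_arc m n : 0 <= m -> 0 <= n ->
  ell a b (lincomb m n t2 t3) = 1 -> arc (lincomb m n t2 t3).
Proof.
move=> m0 n0 e; split=> //; rewrite side_lincomb mulrAC pmulr_rge0 ?arc_weight_gt0 //.
by rewrite subr_ge0; apply/(ellipse_cone_sum a_gt0 b_gt0 ell_t2 ell_t3 cross_t2_t3_neq0 e).
Qed.

Lemma arc_t2 : arc t2.
Proof. by split; rewrite ?ell_t2 // side_left mul0r. Qed.

Lemma arc_t3 : arc t3.
Proof. by split; rewrite ?ell_t3 // side_right mul0r. Qed.

Lemma dot_arc_le1 P W : arc P -> arc W -> dot (nrm P) W <= 1.
Proof. by case=> eP _ [eW _]; exact: dot_ell_normal_le1. Qed.

Lemma dot_arc_k2 P : arc P -> dot (nrm P) k2 <= 1.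
Proof.
move=> hP; apply: le_trans (dot_arc_le1 hP arc_t2).
have [m [n [m0 n0 _ ->]]] := arc_lincomb hP.
rewrite !dot_ell_normal_lincomb dot_t2_k2 dot_ell_normal_diag ell_t2 lerD2l.
exact: ler_wpM2l n0 _ _ dot_t3_k2_le.
Qed.

Lemma dot_arc_k3 P : arc P -> dot (nrm P) k3 <= 1.
Proof.
move=> hP; apply: le_trans (dot_arc_le1 hP arc_t3).
have [m [n [m0 n0 _ ->]]] := arc_lincomb hP.
rewrite !dot_ell_normal_lincomb dot_t3_k3 dot_ell_normal_diag ell_t3 lerD2r.
exact: ler_wpM2l m0 _ _ dot_t2_k3_le.
Qed.

Lemma dot_contour_le1 P W : arc P -> contourL a b D W -> dot (nrm P) W <= 1.
Proof.
move=> hP [[[hW|hW]|hW]|hW].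
- exact: dot_segment_le hW (dot_arc_k3 hP) (dot_arc_k2 hP).
- exact: dot_segment_le hW (dot_arc_k2 hP) (dot_arc_le1 hP arc_t2).
- exact: dot_arc_le1.
- exact: dot_segment_le hW (dot_arc_le1 hP arc_t3) (dot_arc_k3 hP).
Qed.

(* [nrm P] supports the contour at [Y]; the sign conditions are what the rollback
   targets [(0, y3)] and [(y2, y2)] require. *)
Lemma contour_support Y : contourL a b D Y -> Y.1 < 0 \/ Y.2 < 0 ->
  exists2 P, arc P & [/\ dot (nrm P) Y = 1,
    Y.1 = 0 -> 0 <= (nrm P).1 & Y.1 = Y.2 -> 0 <= (nrm P).2].
Proof.
have [x2_lt0 y2_lt] := t2_coord; have [x3_lt y3_lt0] := t3_coord.
move=> [[[hY|hY]|hY]|hY] Yneg.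
- exfalso; case/segmentP: hY Yneg => s /andP[s0 s1] ->.
  have := k2_gt0; have := k3_gt0; rewrite /lincomb k2E k3E /= => u3_gt0 u2_gt0.
  have s1' : 0 <= 1 - s by rewrite subr_ge0.
  have Y1_ge0 := mulr_ge0 s0 (ltW u2_gt0).
  have Y2_ge0 := mulr_ge0 s1' (ltW u3_gt0).
  by case=> ?; lra.
- exists t2; first exact: arc_t2.
  have YE : dot (nrm t2) Y = 1.
    by apply: dot_segment_eq hY dot_t2_k2 _; rewrite dot_ell_normal_diag ell_t2.
  have Y12 : 0 < dot (1, -1) Y.
    apply: dot_segment_gt0 hY _ _; rewrite /dot ?k2E /=; last by lra.
    by have := k2_gt0; rewrite k2E /=; lra.
  have [c c_gt0 E] := t2_normal.
  split=> //; first by rewrite E => _; exact: ltW.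
  by move: Y12; rewrite /dot /= => Y12 Y12_eq; rewrite Y12_eq in Y12; lra.
- exists Y => //; split=> [|Y1_0|Y12_eq]; last by rewrite /= Y12_eq subrr mulr0 oppr0.
    by case: hY => eY _; rewrite dot_ell_normal_diag.
  case: Yneg => [|Y2_lt0]; first by rewrite Y1_0 ltxx.
  by rewrite /= Y1_0 mulr0 add0r sub0r mulrN oppr_ge0 pmulr_rle0 // ltW.
- exists t3; first exact: arc_t3.
  have YE : dot (nrm t3) Y = 1.
    by apply: dot_segment_eq hY _ dot_t3_k3; rewrite dot_ell_normal_diag ell_t3.
  have [c c_gt0 E] := t3_normal.
  split=> //; last by rewrite E => _; exact: ltW.
  move=> Y1_0.
  exfalso; have := k3_gt0; rewrite k3E /= => u3_gt0.
  case/segmentP: hY Yneg Y1_0 => s /andP[s0 s1] ->; rewrite /lincomb k3E /= mulr0 addr0.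
  move=> Yneg /eqP; rewrite mulf_eq0 (negbTE (ltr0_neq0 (lt_trans x3_lt y3_lt0))) orbF.
  rewrite subr_eq0 => /eqP s1E; move: Yneg; rewrite -s1E subrr !mul0r add0r mul1r ltxx.
  by case=> //; rewrite ltNge ltW.
Qed.

Lemma ray_k2t2 X : X.2 <= 0 -> 0 <= cross t2 X -> X != (0, 0) ->
  exists2 t, 0 < t & segment k2 t2 (X.1 / t, X.2 / t).
Proof.
move=> X2_le0 hX X_neq0; have [x2_lt0 y2_lt] := t2_coord; have u2_gt0 := k2_gt0.
have k2_2 : k2.2 = 0 by rewrite k2E.
have c_lt0 : cross k2 t2 < 0 by rewrite /cross k2_2 mul0r subr0 pmulr_rlt0 //; lra.
have m_ge0 : 0 <= cross X t2 * cross k2 t2.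
  by apply: mulr_le0 (ltW c_lt0); rewrite /cross in hX *; lra.
have n_ge0 : 0 <= cross k2 X * cross k2 t2.
  by apply: mulr_le0 (ltW c_lt0); rewrite /cross k2_2 mul0r subr0 mulr_ge0_le0 // ltW.
have [m [n [m0 n0 EX]]] := cone_lincomb (ltr0_neq0 c_lt0) m_ge0 n_ge0.
exact: cone_segment m0 n0 EX X_neq0.
Qed.

Lemma ray_t3k3 X : X.1 <= 0 -> 0 <= cross X t3 -> X != (0, 0) ->
  exists2 t, 0 < t & segment t3 k3 (X.1 / t, X.2 / t).
Proof.
move=> X1_le0 hX X_neq0; have [x3_lt y3_lt0] := t3_coord; have u3_gt0 := k3_gt0.
have k3_1 : k3.1 = 0 by rewrite k3E.
have c_lt0 : cross t3 k3 < 0 by rewrite /cross k3_1 mulr0 subr0 mulrC pmulr_rlt0 //; lra.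
have m_ge0 : 0 <= cross X k3 * cross t3 k3.
  by apply: mulr_le0 (ltW c_lt0); rewrite /cross k3_1 mulr0 subr0 mulrC mulr_ge0_le0 // ltW.
have n_ge0 : 0 <= cross t3 X * cross t3 k3.
  by apply: mulr_le0 (ltW c_lt0); rewrite /cross in hX *; lra.
have [m [n [m0 n0 EX]]] := cone_lincomb (ltr0_neq0 c_lt0) m_ge0 n_ge0.
exact: cone_segment m0 n0 EX X_neq0.
Qed.

Lemma ray_arc X : cross t2 X <= 0 -> cross X t3 <= 0 -> X != (0, 0) ->
  exists2 t, 0 < t & arc (X.1 / t, X.2 / t).
Proof.
move=> hX2 hX3 X_neq0; have c_lt0 := cross_t2_t3.
have [m [n [m0 n0 EX]]] := cone_lincomb cross_t2_t3_neq0
  (mulr_le0 hX3 (ltW c_lt0)) (mulr_le0 hX2 (ltW c_lt0)).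
have eX_gt0 := ell_gt0 a_gt0 b_gt0 X_neq0; set t := Num.sqrt (ell a b X).
have t_gt0 : 0 < t by rewrite sqrtr_gt0.
exists t => //; rewrite [in X in arc X]EX lincomb_div.
apply: lincomb_arc; rewrite ?divr_ge0 ?(ltW t_gt0) // -lincomb_div -EX.
by rewrite ell_div sqr_sqrtr ?divff ?gt_eqF // ltW.
Qed.

Lemma contour_ray X : X.1 < 0 \/ X.2 < 0 ->
  exists2 t, 0 < t & contourL a b D (X.1 / t, X.2 / t).
Proof.
move=> Xneg; have X_neq0 := neg_coord_neq0 Xneg.
have [x2_lt0 y2_lt] := t2_coord; have [x3_lt y3_lt0] := t3_coord.
have [p_ge0|p_lt0] := lerP 0 (cross t2 X); have [q_ge0|q_lt0] := lerP 0 (cross X t3).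
- have [X2_le0|X2_gt0] := lerP X.2 0.
    by have [t t_gt0 hL] := ray_k2t2 X2_le0 p_ge0 X_neq0; exists t => //; left; left; right.
  have X1_le0 : X.1 <= 0 by case: Xneg; lra.
  by have [t t_gt0 hL] := ray_t3k3 X1_le0 q_ge0 X_neq0; exists t => //; right.
- have X2_le0 : X.2 <= 0.
    rewrite leNgt; apply/negP => X2_gt0; rewrite /cross in q_lt0.
    by case: Xneg => [X1_lt0|]; [nra | lra].
  by have [t t_gt0 hL] := ray_k2t2 X2_le0 p_ge0 X_neq0; exists t => //; left; left; right.
- have X1_le0 : X.1 <= 0.
    rewrite leNgt; apply/negP => X1_gt0; rewrite /cross in p_lt0.
    by case: Xneg => [|X2_lt0]; [lra | nra].
  by have [t t_gt0 hL] := ray_t3k3 X1_le0 q_ge0 X_neq0; exists t => //; right.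
- by have [t t_gt0 hL] := ray_arc (ltW p_lt0) (ltW q_lt0) X_neq0; exists t => //; left; right.
Qed.

Lemma phi_spec X : X.1 < 0 \/ X.2 < 0 ->
  0 < phiD X /\ contourL a b D (X.1 / phiD X, X.2 / phiD X).
Proof.
move=> Xneg; rewrite /phi (negbTE (neg_coord_neq0 Xneg)).
apply: (xgetPex 0 (P := [set t | 0 < t /\ contourL a b D (X.1 / t, X.2 / t)])).
by have [t t_gt0 hL] := contour_ray Xneg; exists t.
Qed.

Lemma phi_ge P X : arc P -> X.1 < 0 \/ X.2 < 0 -> dot (nrm P) X <= phiD X.
Proof.
move=> hP /phi_spec[phi_gt0 hL].
by have := dot_contour_le1 hP hL; rewrite dot_div ler_pdivrMr // mul1r.
Qed.

Lemma phi_support X : X.1 < 0 \/ X.2 < 0 -> exists2 P, arc P &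
  [/\ dot (nrm P) X = phiD X, X.1 = 0 -> 0 <= (nrm P).1 & X.1 = X.2 -> 0 <= (nrm P).2].
Proof.
move=> Xneg; have [phi_gt0 hL] := phi_spec Xneg; set t := phiD X in phi_gt0 hL *.
have Yneg : X.1 / t < 0 \/ X.2 / t < 0.
  by case: Xneg => h; [left | right]; rewrite pmulr_llt0 ?invr_gt0.
have [P hP [PY P1 P2]] := contour_support hL Yneg.
exists P => //; split=> [|X1_0|X12_eq].
- by move: PY; rewrite dot_div => /(congr1 ( *%R^~ t)); rewrite divfK ?mul1r ?gt_eqF.
- by apply: P1; rewrite /= X1_0 mul0r.
- by apply: P2; rewrite /= X12_eq.
Qed.

Lemma dot_arc_le P M d : arc P -> 0 <= d ->
  dot (nrm t2) M <= - d -> dot (nrm t3) M <= - d -> dot (nrm P) M <= - d.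
Proof.
move=> hP d_ge0 h2 h3; have [m [n [m0 n0 s1 ->]]] := arc_lincomb hP.
rewrite dot_ell_normal_lincomb.
have := ler_wpM2l m0 h2; have := ler_wpM2l n0 h3; nra.
Qed.

Lemma drift_bound M : 0 < M.1 < 1 -> 0 < M.2 < 1 -> M.1 < D * M.2 -> M.2 < D * M.1 ->
  exists2 d, 0 < d & forall y : int * int, Num.min y.1 y.2 < 0 ->
    phiD ((ptR y).1 + M.1, (ptR y).2 + M.2) - phiD (ptR y) <= - d.
Proof.
move=> /andP[M1_gt0 M1_lt1] /andP[M2_gt0 M2_lt1] M12 M21.
have [c2 c2_gt0 N2] := t2_normal; have [c3 c3_gt0 N3] := t3_normal.
set d := Num.min (c2 * (D * M.2 - M.1)) (c3 * (D * M.1 - M.2)).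
have d_gt0 : 0 < d by rewrite lt_min !mulr_gt0 ?subr_gt0.
have d2 : d <= c2 * (D * M.2 - M.1) by rewrite ge_min lexx.
have d3 : d <= c3 * (D * M.1 - M.2) by rewrite ge_min lexx orbT.
exists d => // y /(ptR_neg R) yneg.
have Yneg : (ptR y : R * R).1 < 0 \/ (ptR y : R * R).2 < 0 by case: yneg => h; [left | right]; lra.
pose X := ((ptR y : R * R).1 + M.1, (ptR y : R * R).2 + M.2).
have Xneg : X.1 < 0 \/ X.2 < 0 by case: yneg => h; [left | right]; rewrite /= in h *; lra.
have [P hP [PX _ _]] := phi_support Xneg.
have PM : dot (nrm P) M <= - d.
  by apply: dot_arc_le hP (ltW d_gt0) _ _; rewrite ?N2 ?N3 /dot /=; lra.
have := phi_ge hP Yneg; rewrite -/X -PX /X dotD; lra.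
Qed.

Lemma phi_le_shift_right (i j : int) : 0 < i -> j < 0 ->
  phiD (ptR (0, j)) <= phiD (ptR (i, j)).
Proof.
move=> i_gt0 j_lt0; have j_le := int_le_Nr1 R j_lt0.
have i_gt0' : 0 < (i%:~R : R) by rewrite ltr0z.
have neg k : (ptR (k, j) : R * R).2 < 0 by rewrite /=; lra.
have [P hP [PX P1 _]] := phi_support (or_intror (neg 0)).
rewrite -PX; apply: le_trans (phi_ge hP (or_intror (neg i))).
have := P1 erefl; rewrite /dot /= mulr0 add0r; nra.
Qed.

Lemma phi_le_shift_up (i j : int) : i < 0 -> i < j ->
  phiD (ptR (i, i)) <= phiD (ptR (i, j)).
Proof.
move=> i_lt0 ij; have i_le := int_le_Nr1 R i_lt0.
have ij' : (i%:~R : R) < j%:~R by rewrite ltr_int.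
have neg k : (ptR (i, k) : R * R).1 < 0 by rewrite /=; lra.
have [P hP [PX _ P2]] := phi_support (or_introl (neg i)).
rewrite -PX; apply: le_trans (phi_ge hP (or_introl (neg j))).
have := P2 erefl; rewrite /dot /=; nra.
Qed.

Lemma DR_le0 l2 b12 b23 (y : int * int) : 0 <= b12 -> 0 <= b23 ->
  Num.min y.1 y.2 < 0 -> DR l2 b12 b23 a b D y <= 0.
Proof.
case: y => i j b12_ge0 b23_ge0; rewrite /= gt_min => /orP yneg.
rewrite /DR; apply: sumr_le0 => z _; rewrite /rrate /=.
have -> : (0 < j) && (j <= i) = false by apply/negP => /andP[]; case: yneg; lra.
have -> : (0 < i) && (i < j) = false by apply/negP => /andP[]; case: yneg; lra.
rewrite !addr0; case: ifP => [/andP[/andP[i_gt0 j_le0] /eqP ->]|_].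
  have -> : (i < j) = false by apply/negP; lra.
  rewrite addr0; apply: mulr_ge0_le0 => //; rewrite subr_le0.
  by apply: phi_le_shift_right => //; case: yneg; lra.
case: ifP => [/andP[ij /eqP ->]|_]; last by rewrite addr0 mul0r.
rewrite add0r; apply: mulr_ge0_le0 => //; rewrite subr_le0.
by apply: phi_le_shift_up => //; case: yneg; lra.
Qed.

End Contour.

Theorem lemma4 (R : realType) (l1 l2 l3 b12 b23 a b : R) :
  0 < l1 -> 0 < l2 -> 0 < l3 -> 0 < b12 -> 0 < b23 ->
  l1 + l2 + l3 + b12 + b23 = 1 ->
  l1 < l2 -> l1 < l3 -> 0 < a -> 0 < b ->
  exists D0 : R, forall D : R, 0 < D -> D0 < D ->
    exists C eps : R, 0 < C /\ 0 < eps /\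
      forall y : int * int, Num.min y.1 y.2 < 0 -> C < phi a b D (ptR y) ->
        DR l2 b12 b23 a b D y <= 0 /\
        phi a b D ((ptR y).1 + (MF l1 l2 l3).1, (ptR y).2 + (MF l1 l2 l3).2)
          - phi a b D (ptR y) < - (5 * eps).
Proof.
move=> l1_gt0 l2_gt0 l3_gt0 b12_gt0 b23_gt0 l_sum l12 l13 a_gt0 b_gt0.
have [m2_gt0 m3_gt0] : 0 < l2 - l1 /\ 0 < l3 - l1 by rewrite !subr_gt0.
exists (1 + a / b + (l2 - l1) / (l3 - l1) + (l3 - l1) / (l2 - l1)) => D _ D_gt.
have [r1 r2 r3] :
    [/\ 0 <= a / b, 0 <= (l2 - l1) / (l3 - l1) & 0 <= (l3 - l1) / (l2 - l1)].
  by split; rewrite divr_ge0 // ltW.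
have D_gt1 : 1 < D by lra.
have a_lt : a < b * (D - 1) by rewrite mulrC -ltr_pdivrMr //; lra.
have m23 : l2 - l1 < D * (l3 - l1) by rewrite -ltr_pdivrMr //; lra.
have m32 : l3 - l1 < D * (l2 - l1) by rewrite -ltr_pdivrMr //; lra.
have m2_lt1 : 0 < l2 - l1 < 1 by apply/andP; split; lra.
have m3_lt1 : 0 < l3 - l1 < 1 by apply/andP; split; lra.
have [d d_gt0 drift] :=
  drift_bound a_gt0 b_gt0 D_gt1 a_lt (M := MF l1 l2 l3) m2_lt1 m3_lt1 m23 m32.
(* Both bounds hold for every [y] off the closed first quadrant, so [C] is irrelevant. *)
exists 1, (d / 10); do 2!split=> //; first by rewrite divr_gt0.
move=> y y_neg _; split; first exact: DR_le0 (ltW b12_gt0) (ltW b23_gt0) y_neg.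
by have := drift y y_neg; lra.
Qed.
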